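(* For every algebra $A$ (not necessarily unital or commutative) we have $\mathfrak{P}^{\mathrm{nc}}(A)=0$.
   Context: Fix a field $\mathbb{F}$; algebras are associative $\mathbb{F}$-algebras, not necessarily unital or commutative. For an algebra $A$, $\mathfrak{P}^{\mathrm{nc}}(A)$ is the set of $a\in A$ such that for every algebra $C$ and every algebra morphism $\varphi:A\to C[x]$, $\varphi(a)$ is a constant polynomial (lies in $C\subseteq C[x]$). (The paper defines it via a universal pro-algebra $\mathfrak{M}^{\mathrm{nc}}_{A,\mathbb{F}[x]}$ and proves it equals this set.) *)

From mathcomp Require Import all_boot all_order all_algebra.
Set Implicit Arguments. Unset Strict Implicit. Unset Printing Implicit Defensive.
Import GRing.Theory.
Local Open Scope ring_scope.

Record ncalg (F : fieldType) := NCAlg {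
  ncalg_car :> lmodType F;
  ncmul : ncalg_car -> ncalg_car -> ncalg_car;
  ncmulA : associative ncmul;
  ncmulDl : forall x y z, ncmul (x + y) z = ncmul x z + ncmul y z;
  ncmulDr : forall x y z, ncmul x (y + z) = ncmul x y + ncmul x z;
  ncmulZl : forall (k : F) x y, ncmul (k *: x) y = k *: ncmul x y;
  ncmulZr : forall (k : F) x y, ncmul x (k *: y) = k *: ncmul x y
}.

(* Elements of C[x] are represented by their coefficient sequences
   p : nat -> C (p n = coefficient of x^n) with finite support. *)
Definition finsupp (F : fieldType) (C : ncalg F) (p : nat -> C) : Prop :=
  exists N : nat, forall n, (N <= n)%N -> p n = 0.

Definition polymul (F : fieldType) (C : ncalg F) (p q : nat -> C) : nat -> C :=
  fun n => \sum_(i < n.+1) ncmul (p i) (q (n - i)%N).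

Definition is_alg_morph_to_poly (F : fieldType) (A C : ncalg F)
    (phi : A -> nat -> C) : Prop :=
  [/\ forall a, finsupp (phi a),
      forall a b n, phi (a + b) n = phi a n + phi b n,
      forall (k : F) a n, phi (k *: a) n = k *: phi a n &
      forall a b n, phi (ncmul a b) n = polymul (phi a) (phi b) n].

Definition is_const_poly (F : fieldType) (C : ncalg F) (p : nat -> C) : Prop :=
  forall n, (0 < n)%N -> p n = 0.

Definition Pnc (F : fieldType) (A : ncalg F) (a : A) : Prop :=
  forall (C : ncalg F) (phi : A -> nat -> C),
    is_alg_morph_to_poly phi -> is_const_poly (phi a).

(* If a <> 0, map A into C[x] for the algebra C = A x A with product
   (a, b)(c, d) = (ac, ad): the square-zero extension of A by the bimodule A
   with left multiplication and zero right action.  In C the element (0, b)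
   annihilates everything on its right, so a |-> (a, 0) + (0, a) x is an
   algebra morphism A -> C[x], and it sends a to a polynomial of degree 1. *)
From mathcomp Require Import all_boot all_order all_algebra.
Local Open Scope ring_scope.
Import GRing.Theory.

Section NcalgTheory.
Variables (F : fieldType) (A : ncalg F).

Lemma ncmul0l (y : A) : ncmul 0 y = 0.
Proof. by have := ncmulZl (0 : F) (0 : A) y; rewrite !scale0r. Qed.

Lemma ncmul0r (y : A) : ncmul y 0 = 0.
Proof. by have := ncmulZr (0 : F) y (0 : A); rewrite !scale0r. Qed.

Lemma alg_morph_to_poly0 (C : ncalg F) (phi : A -> nat -> C) n :
  is_alg_morph_to_poly phi -> phi 0 n = 0.
Proof.
by case=> _ phiD _ _; apply: (addrI (phi 0 n)); rewrite -phiD !addr0.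
Qed.

Lemma Pnc0 : Pnc (0 : A).
Proof. by move=> C phi phi_morph n _; exact: alg_morph_to_poly0. Qed.

End NcalgTheory.

Section LeftSquareZeroExtension.
Variables (F : fieldType) (A : ncalg F).

Definition lsqz_mul (p q : A * A) : A * A := (ncmul p.1 q.1, ncmul p.1 q.2).

Lemma lsqz_mulA : associative lsqz_mul.
Proof. by move=> [a b] [c d] [e f]; rewrite /lsqz_mul /= !ncmulA. Qed.

Lemma lsqz_mulDl p q r : lsqz_mul (p + q) r = lsqz_mul p r + lsqz_mul q r.
Proof. by case: p q r => [a b] [c d] [e f]; rewrite /lsqz_mul /= !ncmulDl. Qed.

Lemma lsqz_mulDr p q r : lsqz_mul p (q + r) = lsqz_mul p q + lsqz_mul p r.
Proof. by case: p q r => [a b] [c d] [e f]; rewrite /lsqz_mul /= !ncmulDr. Qed.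

Lemma lsqz_mulZl (k : F) p q : lsqz_mul (k *: p) q = k *: lsqz_mul p q.
Proof. by case: p q => [a b] [c d]; rewrite /lsqz_mul /= !ncmulZl. Qed.

Lemma lsqz_mulZr (k : F) p q : lsqz_mul p (k *: q) = k *: lsqz_mul p q.
Proof. by case: p q => [a b] [c d]; rewrite /lsqz_mul /= !ncmulZr. Qed.

Definition lsqz_ncalg : ncalg F :=
  NCAlg lsqz_mulA lsqz_mulDl lsqz_mulDr lsqz_mulZl lsqz_mulZr.

Lemma lsqz_mul0l (b : A) (q : lsqz_ncalg) : ncmul ((0, b) : lsqz_ncalg) q = 0.
Proof. by rewrite /= /lsqz_mul /= !ncmul0l. Qed.

Definition lsqz_embed (a : A) (n : nat) : lsqz_ncalg :=
  (if n == 0%N then a else 0, if n == 1%N then a else 0).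

Lemma lsqz_embed_mul a b n :
  lsqz_embed (ncmul a b) n = polymul (lsqz_embed a) (lsqz_embed b) n.
Proof.
symmetry; rewrite /polymul big_ord_recl big1 => [|i _]; last exact: lsqz_mul0l.
rewrite addr0 subn0 /= /lsqz_mul /lsqz_embed /=.
by case: n => [|[|n]] /=; rewrite ncmul0r.
Qed.

Lemma lsqz_embed_morph : is_alg_morph_to_poly lsqz_embed.
Proof.
split=> [a | a b | k a | a b n]; last exact: lsqz_embed_mul.
- by exists 2%N; case=> [|[|n]].
- by case=> [|[|n]]; congr pair; rewrite /= ?addr0.
- by case=> [|[|n]]; congr pair; rewrite /= ?scaler0.
Qed.

End LeftSquareZeroExtension.

Theorem mainTheorem9 (F : fieldType) (A : ncalg F) (a : A) :
  Pnc a <-> a = 0.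
Proof.
split=> [Pa | ->]; last exact: Pnc0.
by have [] := Pa _ _ (@lsqz_embed_morph _ A) 1%N isT.
Qed.
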